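(* Let $\Gamma,\Gamma'$ be bases and $\Delta,\Delta'$ name contexts with $\Gamma'\le_D\Gamma$ and $\Delta'\le_C\Delta$. If $\Gamma\vdash T:\sigma\mid\Delta$ is derivable, then $\Gamma'\vdash T:\sigma\mid\Delta'$ is derivable, where $T$ is any term or command.
   Context: $\lambda\mu$ terms and commands: $M::=x\mid\lambda x.M\mid MN\mid\mu\alpha.\mathsf C$ and $\mathsf C::=[\alpha]M$, over term variables $x$ and names $\alpha$, up to renaming of bound variables and names. Types. Fix an $\omega$-algebraic lattice $R$ with compact elements $\mathcal K(R)$. - $\Lambda_R$: $\rho::=\psi_a\mid\omega\mid\rho\wedge\rho$ ($a\in\mathcal K(R)$). - $\Lambda_D$: $\delta::=\rho\mid\kappa\to\rho\mid\omega\mid\delta\wedge\delta$. - $\Lambda_C$: $\kappa::=\delta\times\kappa\mid\omega\mid\kappa\wedge\kappa$. $\times$ binds tighter than $\to$ and is right associative. An intersection type theory is a reflexive, transitive relation $\le$ with $\sigma\wedge\tau\le\sigma$, $\sigma\wedge\tau\le\tau$, $\sigma\le\omega$, and, if $\rho\le\sigma$ and $\rho\le\tau$, then $\rho\le\sigma\wedge\tau$; $\sim$ denotes $\le\cap\ge$. The relations are: - $\le_R$: the least such theory on $\Lambda_R$ with $\psi_\bot\sim\omega$ and $\psi_{a\sqcup b}\sim\psi_a\wedge\psi_b$. - $\le_D$ and $\le_C$: the least such theories closed under: - if $\rho_1\le_R\rho_2$ then $\rho_1\le_D\rho_2$; - $\omega\le_D\omega\to\omega$; - $\psi_a\le_D\omega\to\psi_a$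 and $\omega\to\psi_a\le_D\psi_a$; - $\omega\le_C\omega\times\omega$; - $(\kappa\to\rho_1)\wedge(\kappa\to\rho_2)\le_D\kappa\to(\rho_1\wedge\rho_2)$; - $(\delta_1\times\kappa_1)\wedge(\delta_2\times\kappa_2)\le_C(\delta_1\wedge\delta_2)\times(\kappa_1\wedge\kappa_2)$; - contravariance/covariance of $\to$ (if $\kappa_2\le_C\kappa_1$ and $\rho_1\le_R\rho_2$ then $\kappa_1\to\rho_1\le_D\kappa_2\to\rho_2$); - covariance of $\times$ in both arguments. Type assignment. A basis $\Gamma$ is a finite map from term variables to $\Lambda_D$, and a name context $\Delta$ is a finite map from names to $\Lambda_C$. $\Gamma(x)$ denotes the assigned type, or $\omega$ if $x\notin\mathrm{dom}(\Gamma)$; similarly $\Delta(\alpha)$. $\Gamma,x{:}\delta$ denotes $\Gamma\cup\{x{:}\delta\}$ (requiring $x\notin\mathrm{dom}(\Gamma)$ or $x{:}\delta\in\Gamma$); $\Gamma\setminus x$ and $\Delta\setminus\alpha$ remove an entry. $\Gamma'\le_D\Gamma$ means $\Gamma'(x)\le_D\Gamma(x)$ for all term variables $x$, and $\Delta'\le_C\Delta$ means $\Delta'(\alpha)\le_C\Delta(\alpha)$ for all names $\alpha$. The rules are: - (Ax) $\Gamma,x{:}\delta\vdash x:\delta\mid\Delta$. - (Abs) From $\Gamma\vdash M:\kappa\to\rho\mid\Delta$ with $\Gamma(x)=\delta$, infer $\Gamma\setminus x\vdash\lambda x.M:\delta\times\kappa\to\rho\mid\Delta$. - (App) From $\Gamma\vdash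 M:\delta\times\kappa\to\rho\mid\Delta$ and $\Gamma\vdash N:\delta\mid\Delta$, infer $\Gamma\vdash MN:\kappa\to\rho\mid\Delta$. - (Cmd) From $\Gamma\vdash M:\delta\mid\Delta$ with $\Delta(\alpha)=\kappa$, infer $\Gamma\vdash[\alpha]M:\delta\times\kappa\mid\Delta$. - ($\mu$) From $\Gamma\vdash\mathsf C:(\kappa'\to\rho)\times\kappa'\mid\Delta$ with $\Delta(\alpha)=\kappa$, infer $\Gamma\vdash\mu\alpha.\mathsf C:\kappa\to\rho\mid\Delta\setminus\alpha$. - ($\wedge$) From $T:\sigma$ and $T:\tau$ (same $\Gamma,\Delta$), infer $T:\sigma\wedge\tau$. - ($\omega$) $\Gamma\vdash T:\omega\mid\Delta$. - ($\le$) From $\Gamma\vdash T:\sigma\mid\Delta$ and $\sigma\le\tau$ (in $\le_D$ or $\le_C$), infer $\Gamma\vdash T:\tau\mid\Delta$. Variables of $\Gamma$ and names of $\Delta$ are assumed not bound in $T$. *)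

From Stdlib Require Import List.
Set Implicit Arguments.

Definition directed {T : Type} (le : T -> T -> Prop) (D : T -> Prop) : Prop :=
  (exists x, D x) /\
  (forall x y, D x -> D y -> exists z, D z /\ le x z /\ le y z).

Definition is_compact {T : Type} (le : T -> T -> Prop) (sup : (T -> Prop) -> T)
  (a : T) : Prop :=
  forall D, directed le D -> le a (sup D) -> exists d, D d /\ le a d.

Record omega_alg_lattice := {
  car :> Type;
  ord : car -> car -> Prop;
  ord_refl : forall x, ord x x;
  ord_trans : forall x y z, ord x y -> ord y z -> ord x z;
  ord_antisym : forall x y, ord x y -> ord y x -> x = y;
  sup : (car -> Prop) -> car;
  sup_ub : forall S x, S x -> ord x (sup S);
  sup_least : forall S y, (forall x, S x -> ord x y) -> ord (sup S) y;
  algebraic : forall x, x = sup (fun a => is_compact ord sup a /\ ord a x);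
  omega_basis : exists e : nat -> car,
      forall a, is_compact ord sup a -> exists n, e n = a
}.

Definition compact (L : omega_alg_lattice) (a : L) : Prop :=
  is_compact (@ord L) (@sup L) a.

Definition K (L : omega_alg_lattice) := { a : L | @compact L a }.

Definition lbot (L : omega_alg_lattice) : L := sup L (fun _ => False).
Definition ljoin (L : omega_alg_lattice) (a b : L) : L :=
  sup L (fun x => x = a \/ x = b).

(* One raw syntax; the three languages Lambda_R, Lambda_D, Lambda_C are the
   sub-languages carved out by isR, isD, isC (they share omega and /\, as
   in the paper's grammars). *)
Inductive ty (L : omega_alg_lattice) : Type :=
| Psi  : K L -> ty L
| Om   : ty L
| Meet : ty L -> ty L -> ty L
| Arr  : ty L -> ty L -> ty L
| Prod : ty L -> ty L -> ty L.
Arguments Om {L}.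

Section Types.
Variable L : omega_alg_lattice.

Inductive isR : ty L -> Prop :=
| isR_psi a : isR (Psi a)
| isR_om : isR Om
| isR_meet r1 r2 : isR r1 -> isR r2 -> isR (Meet r1 r2).

Inductive isD : ty L -> Prop :=
| isD_R r : isR r -> isD r
| isD_arr k r : isC k -> isR r -> isD (Arr k r)
| isD_om : isD Om
| isD_meet d1 d2 : isD d1 -> isD d2 -> isD (Meet d1 d2)
with isC : ty L -> Prop :=
| isC_prod d k : isD d -> isC k -> isC (Prod d k)
| isC_om : isC Om
| isC_meet k1 k2 : isC k1 -> isC k2 -> isC (Meet k1 k2).

Inductive leR : ty L -> ty L -> Prop :=
| leR_refl s : isR s -> leR s s
| leR_trans s t u : leR s t -> leR t u -> leR s u
| leR_meetl s t : isR s -> isR t -> leR (Meet s t) s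
| leR_meetr s t : isR s -> isR t -> leR (Meet s t) t
| leR_om s : isR s -> leR s Om
| leR_glb r s t : leR r s -> leR r t -> leR r (Meet s t)
| leR_bot1 (a : K L) : proj1_sig a = lbot L -> leR (Psi a) Om
| leR_bot2 (a : K L) : proj1_sig a = lbot L -> leR Om (Psi a)
| leR_join1 (a b c : K L) : proj1_sig c = @ljoin L (proj1_sig a) (proj1_sig b) ->
    leR (Psi c) (Meet (Psi a) (Psi b))
| leR_join2 (a b c : K L) : proj1_sig c = @ljoin L (proj1_sig a) (proj1_sig b) ->
    leR (Meet (Psi a) (Psi b)) (Psi c).

Inductive leD : ty L -> ty L -> Prop :=
| leD_refl s : isD s -> leD s s
| leD_trans s t u : leD s t -> leD t u -> leD s u
| leD_meetl s t : isD s -> isD t -> leD (Meet s t) s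
| leD_meetr s t : isD s -> isD t -> leD (Meet s t) t
| leD_om s : isD s -> leD s Om
| leD_glb r s t : leD r s -> leD r t -> leD r (Meet s t)
| leD_R r1 r2 : leR r1 r2 -> leD r1 r2
| leD_omarr : leD Om (Arr Om Om)
| leD_psi1 a : leD (Psi a) (Arr Om (Psi a))
| leD_psi2 a : leD (Arr Om (Psi a)) (Psi a)
| leD_arrmeet k r1 r2 : isC k -> isR r1 -> isR r2 ->
    leD (Meet (Arr k r1) (Arr k r2)) (Arr k (Meet r1 r2))
| leD_arr k1 k2 r1 r2 : leC k2 k1 -> leR r1 r2 -> leD (Arr k1 r1) (Arr k2 r2)
with leC : ty L -> ty L -> Prop :=
| leC_refl s : isC s -> leC s s
| leC_trans s t u : leC s t -> leC t u -> leC s u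
| leC_meetl s t : isC s -> isC t -> leC (Meet s t) s
| leC_meetr s t : isC s -> isC t -> leC (Meet s t) t
| leC_om s : isC s -> leC s Om
| leC_glb r s t : leC r s -> leC r t -> leC r (Meet s t)
| leC_omprod : leC Om (Prod Om Om)
| leC_prodmeet d1 d2 k1 k2 : isD d1 -> isD d2 -> isC k1 -> isC k2 ->
    leC (Meet (Prod d1 k1) (Prod d2 k2)) (Prod (Meet d1 d2) (Meet k1 k2))
| leC_prod d1 d2 k1 k2 : leD d1 d2 -> leC k1 k2 -> leC (Prod d1 k1) (Prod d2 k2).

End Types.

(* ---------- lambda-mu terms, de Bruijn (terms up to renaming) ----------
   Term variables and names live in two separate de Bruijn index spaces:
   Lam binds term variable 0, Mu binds name 0. *)
Inductive term : Type :=
| Var : nat -> term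
| Lam : term -> term
| App : term -> term -> term
| Mu  : cmd -> term
with cmd : Type :=
| Name : nat -> term -> cmd.

Section Typing.
Variable L : omega_alg_lattice.

(* A basis / name context is a finite list; Gamma(x) = nth x Gamma omega. *)
Definition ctx := list (ty L).
Definition lookup (G : ctx) (n : nat) : ty L := nth n G Om.

Inductive typ_t : ctx -> term -> ty L -> ctx -> Prop :=
| t_ax G x D : typ_t G (Var x) (lookup G x) D
| t_abs G M d k r D : isD d ->
    typ_t (d :: G) M (Arr k r) D -> typ_t G (Lam M) (Arr (Prod d k) r) D
| t_app G M N d k r D :
    typ_t G M (Arr (Prod d k) r) D -> typ_t G N d D -> typ_t G (App M N) (Arr k r) D
| t_mu G C k' r k D : isC k ->
    typ_c G C (Prod (Arr k' r) k') (k :: D) -> typ_t G (Mu C) (Arr k r) D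
| t_meet G M s t D : typ_t G M s D -> typ_t G M t D -> typ_t G M (Meet s t) D
| t_om G M D : typ_t G M Om D
| t_le G M s t D : typ_t G M s D -> leD s t -> typ_t G M t D
with typ_c : ctx -> cmd -> ty L -> ctx -> Prop :=
| c_cmd G a M d D : typ_t G M d D -> typ_c G (Name a M) (Prod d (lookup D a)) D
| c_meet G C s t D : typ_c G C s D -> typ_c G C t D -> typ_c G C (Meet s t) D
| c_om G C D : typ_c G C Om D
| c_le G C s t D : typ_c G C s D -> leC s t -> typ_c G C t D.

End Typing.

(* Only (Ax) and (Cmd) read the contexts: at
   (Ax) the type Γ'(x) is raised to Γ(x) by subsumption, and at (Cmd) the
   comparison Δ'(α) ≤_C Δ(α) is pushed through covariance of ×, which needs
   δ ≤_D δ and hence that derivable types are well formed. The binders of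
   (Abs) and (μ) extend both contexts by the same type, preserving the
   pointwise comparison. *)
From Stdlib Require Import List.

Scheme leD_mut_ind := Induction for leD Sort Prop
  with leC_mut_ind := Induction for leC Sort Prop.
Combined Scheme leD_leC_mut_ind from leD_mut_ind, leC_mut_ind.

Scheme typ_t_mut_ind := Induction for typ_t Sort Prop
  with typ_c_mut_ind := Induction for typ_c Sort Prop.
Combined Scheme typ_mut_ind from typ_t_mut_ind, typ_c_mut_ind.

Section Weakening.
Variable L : omega_alg_lattice.

Local Hint Constructors isR isD isC : wf.

Lemma leR_wf (s t : ty L) : leR s t -> isR s /\ isR t.
Proof.
  induction 1; intuition auto with wf.
Qed.

Lemma leD_leC_wf :
  (forall s t : ty L, leD s t -> isD s /\ isD t) /\
  (forall s t : ty L, leC s t -> isC s /\ isC t).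
Proof.
  apply leD_leC_mut_ind; intros;
    repeat match goal with
           | H : _ /\ _ |- _ => destruct H
           | H : leR _ _ |- _ => apply leR_wf in H
           end;
    intuition auto with wf.
Qed.

Lemma isD_Arr_inv {k r : ty L} : isD (Arr k r) -> isC k /\ isR r.
Proof.
  inversion 1 as [r' HR | | |]; [inversion HR | split; assumption].
Qed.

Lemma isC_Prod_inv {d k : ty L} : isC (Prod d k) -> isD d /\ isC k.
Proof.
  inversion 1; split; assumption.
Qed.

Lemma Forall_lookup (P : ty L -> Prop) (G : ctx L) (x : nat) :
  P Om -> Forall P G -> P (lookup G x).
Proof.
  intros HOm HG; unfold lookup; revert x.
  induction HG as [|g G Hg _ IH]; intros [|x]; simpl; auto.
Qed.

Lemma typ_wf :
  (forall G M s D, @typ_t L G M s D ->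
     Forall (@isD L) G -> Forall (@isC L) D -> isD s) /\
  (forall G C s D, @typ_c L G C s D ->
     Forall (@isD L) G -> Forall (@isC L) D -> isC s).
Proof.
  apply typ_mut_ind.
  - intros G x D HG _; apply Forall_lookup; [apply isD_om | assumption].
  - intros G M d k r D Hd _ IH HG HD.
    destruct (isD_Arr_inv (IH (Forall_cons d Hd HG) HD)).
    apply isD_arr; [apply isC_prod |]; assumption.
  - intros G M N d k r D _ IH _ _ HG HD.
    destruct (isD_Arr_inv (IH HG HD)) as [Hdk Hr].
    destruct (isC_Prod_inv Hdk).
    apply isD_arr; assumption.
  - intros G C k' r k D Hk _ IH HG HD.
    destruct (isC_Prod_inv (IH HG (Forall_cons k Hk HD))) as [Hkr _].
    destruct (isD_Arr_inv Hkr).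
    apply isD_arr; assumption.
  - intros; apply isD_meet; auto.
  - intros; apply isD_om.
  - intros G M s t D _ _ Hst _ _; exact (proj2 (proj1 leD_leC_wf _ _ Hst)).
  - intros G a M d D _ IH HG HD.
    apply isC_prod; [auto | apply Forall_lookup; [apply isC_om | assumption]].
  - intros; apply isC_meet; auto.
  - intros; apply isC_om.
  - intros G C s t D _ _ Hst _ _; exact (proj2 (proj2 leD_leC_wf _ _ Hst)).
Qed.

Definition ctx_leD (G' G : ctx L) : Prop :=
  forall x, leD (lookup G' x) (lookup G x).

Definition ctx_leC (D' D : ctx L) : Prop :=
  forall a, leC (lookup D' a) (lookup D a).

Lemma ctx_leD_cons (d : ty L) (G' G : ctx L) :
  isD d -> ctx_leD G' G -> ctx_leD (d :: G') (d :: G).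
Proof.
  intros Hd HG [|x]; [apply leD_refl; assumption | apply HG].
Qed.

Lemma ctx_leC_cons (k : ty L) (D' D : ctx L) :
  isC k -> ctx_leC D' D -> ctx_leC (k :: D') (k :: D).
Proof.
  intros Hk HD [|a]; [apply leC_refl; assumption | apply HD].
Qed.

Lemma typ_weaken :
  (forall G M s D, @typ_t L G M s D ->
     forall G' D', Forall (@isD L) G -> Forall (@isC L) D ->
     ctx_leD G' G -> ctx_leC D' D -> typ_t G' M s D') /\
  (forall G C s D, @typ_c L G C s D ->
     forall G' D', Forall (@isD L) G -> Forall (@isC L) D ->
     ctx_leD G' G -> ctx_leC D' D -> typ_c G' C s D').
Proof.
  apply typ_mut_ind.
  - intros G x D G' D' _ _ HG' _.
    eapply t_le; [apply t_ax | apply HG'].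
  - intros G M d k r D Hd _ IH G' D' HG HD HG' HD'.
    apply t_abs; [assumption |].
    apply IH; auto using ctx_leD_cons.
  - intros G M N d k r D _ IHM _ IHN G' D' HG HD HG' HD'.
    eapply t_app; [apply IHM | apply IHN]; assumption.
  - intros G C k' r k D Hk _ IH G' D' HG HD HG' HD'.
    eapply t_mu; [assumption |].
    apply IH; auto using ctx_leC_cons.
  - intros G M s t D _ IHs _ IHt G' D' HG HD HG' HD'.
    apply t_meet; [apply IHs | apply IHt]; assumption.
  - intros; apply t_om.
  - intros G M s t D _ IH Hst G' D' HG HD HG' HD'.
    eapply t_le; [apply IH |]; eassumption.
  - intros G a M d D HM IH G' D' HG HD HG' HD'.
    eapply c_le; [apply c_cmd, IH; eassumption |].
    apply leC_prod; [| apply HD'].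
    apply leD_refl; exact (proj1 typ_wf _ _ _ _ HM HG HD).
  - intros G C s t D _ IHs _ IHt G' D' HG HD HG' HD'.
    apply c_meet; [apply IHs | apply IHt]; assumption.
  - intros; apply c_om.
  - intros G C s t D _ IH Hst G' D' HG HD HG' HD'.
    eapply c_le; [apply IH |]; eassumption.
Qed.

End Weakening.

Theorem lemma4p7 (L : omega_alg_lattice) (G G' D D' : list (ty L)) :
  Forall (@isD L) G -> Forall (@isD L) G' ->
  Forall (@isC L) D -> Forall (@isC L) D' ->
  (forall x : nat, leD (lookup G' x) (lookup G x)) ->
  (forall a : nat, leC (lookup D' a) (lookup D a)) ->
  (forall (M : term) (s : ty L), typ_t G M s D -> typ_t G' M s D') /\
  (forall (C : cmd) (s : ty L), typ_c G C s D -> typ_c G' C s D').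
Proof.
  intros HG _ HD _ HG' HD'.
  split; intros.
  - eapply (proj1 (typ_weaken L)); eassumption.
  - eapply (proj2 (typ_weaken L)); eassumption.
Qed.
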